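(* Let $G=(V=V_0\uplus V_1,v_{\mathsf{init}},E,\gamma)$ be a quantitative graph game and let $d=\frac{p}{q}>1$ be the discount factor, with $p,q$ positive integers. Then the minimal non-zero difference between the costs of simple lassos in $G$ is a rational number with denominator at most $(p^{|V|}-q^{|V|})^2\cdot p^{2|V|}$.
   Context: A quantitative graph game $G=(V=V_0\uplus V_1, v_{\mathsf{init}},E,\gamma)$ consists of a finite directed graph $(V,E)$ in which every state has at least one outgoing edge, a partition of $V$ into $V_0$ and $V_1$, an initial state $v_{\mathsf{init}}$, and an integer cost function $\gamma:E\to\mathbb{Z}$. A lasso is an infinite path of the form $v_0v_1\dots v_n(s_0s_1\dots s_m)^{\omega}$ in $(V,E)$ starting at $v_{\mathsf{init}}$; it is simple if all the states $v_0,\dots,v_n,s_0,\dots,s_m$ are distinct. The cost of a lasso (or any play) $u_0u_1\dots$ with discount factor $d$ is $\sum_{k\ge0}\gamma(u_k,u_{k+1})/d^{k}$. *)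

From HB Require Import structures.
From mathcomp Require Import all_boot all_order all_algebra.
From mathcomp Require Import all_classical all_reals all_analysis.
Set Implicit Arguments. Unset Strict Implicit. Unset Printing Implicit Defensive.
Import Order.TTheory GRing.Theory Num.Theory numFieldNormedType.Exports.
Local Open Scope ring_scope.

(* A quantitative graph game on a finite set of states V.
   The cost function is given on all pairs of states but only ever
   evaluated on edges. *)
Record game (V : finType) := Game {
  V0 : {set V};            (* V1 is the complement ~: V0 *)
  vinit : V;
  edge : rel V;
  gamma : V -> V -> int;
  edge_total : forall v, exists w, edge v w
}.

(* The infinite play  st ++ cy ++ cy ++ ...  (stem st, cycle cy). *)
Definition lasso_play (V : finType) (G : game V) (st cy : seq V) (k : nat) : V :=
  if (k < size st)%N then nth (vinit G) st k
  else nth (vinit G) cy ((k - size st) %% size cy)%N.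

Definition is_lasso (V : finType) (G : game V) (st cy : seq V) : Prop :=
  (0 < size cy)%N /\ lasso_play G st cy 0 = vinit G /\
  forall k, edge G (lasso_play G st cy k) (lasso_play G st cy k.+1).

Definition simple_lasso (V : finType) (G : game V) (st cy : seq V) : Prop :=
  is_lasso G st cy /\ uniq (st ++ cy).

Definition lasso_cost (R : realType) (V : finType) (G : game V) (p q : nat)
  (st cy : seq V) : R :=
  limn (series (fun k : nat => ((
    (gamma G (lasso_play G st cy k) (lasso_play G st cy k.+1))%:~R
      / ((p%:R / q%:R) ^+ k)) : R))).

From HB Require Import structures.
From mathcomp Require Import all_boot all_order all_algebra.
From mathcomp Require Import all_classical all_reals all_analysis.
From mathcomp Require Import ring.
Set Implicit Arguments.
Unset Strict Implicit.
Unset Printing Implicit Defensive.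
Import Order.TTheory GRing.Theory Num.Theory numFieldNormedType.Exports.
Local Open Scope classical_set_scope.
Local Open Scope ring_scope.

(* After its stem of length m, the cost sequence of a lasso with cycle length
   c repeats up to the factor (q/p)^c, so summing the geometric tail gives
   cost = (S_(m+c) p^(m+c) - S_m p^m q^c) / (p^m (p^c - q^c)), where each
   S_n p^n (S_n the n-th partial sum) is an integer.  For a simple lasso
   m + c <= |V|, which bounds that denominator by p^|V| - q^|V|; the
   difference of two such costs thus has denominator at most
   (p^|V| - q^|V|)^2. *)

Lemma mulnB_expn_le (p q m c : nat) : (q <= p)%N ->
  (p ^ m * (p ^ c - q ^ c) <= p ^ (m + c) - q ^ (m + c))%N.
Proof.
move=> le_qp; rewrite mulnBr -expnD leq_sub2l // !expnD leq_mul //.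
by case: m => [|m] //; rewrite leq_exp2r.
Qed.

Lemma subn_expn_le (p q k n : nat) : (0 < p)%N -> (q <= p)%N -> (k <= n)%N ->
  (p ^ k - q ^ k <= p ^ n - q ^ n)%N.
Proof.
move=> p_gt0 le_qp /subnK <-.
apply: leq_trans _ (mulnB_expn_le (n - k) k le_qp).
by rewrite leq_pmull ?expn_gt0 ?p_gt0.
Qed.

Lemma geometric_recurrence_cvg0 (R : realType) (e : R ^nat) (m c : nat) (x : R) :
  (0 < c)%N -> 0 < x -> x < 1 ->
  (forall n, (m <= n)%N -> e (n + c)%N = x ^+ c * e n) -> e @ \oo --> 0.
Proof.
move=> c_gt0 x_gt0 x_lt1 e_rec.
(* K makes the bound hold on the first period [m, m + c); the recurrence
   then propagates it. *)
pose K := (\sum_(j < c) `|e (m + j)%N|) / x ^+ (m + c).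
have K_ge0 : 0 <= K by rewrite divr_ge0 ?sumr_ge0 // exprn_ge0 // ltW.
have e_bound n : (m <= n)%N -> `|e n| <= K * x ^+ n.
  elim/ltn_ind: n => n IH le_mn.
  have [lt_n_mc | le_mc_n] := ltnP n (m + c).
    have lt_nm_c : (n - m < c)%N by rewrite ltn_subLR.
    apply: (@le_trans _ _ (K * x ^+ (m + c))).
      rewrite /K mulfVK ?expf_neq0 ?gt_eqF // (bigD1 (Ordinal lt_nm_c)) //=.
      by rewrite subnKC // lerDl sumr_ge0.
    by rewrite ler_wpM2l // ler_wiXn2l ?(ltnW lt_n_mc) // ltW.
  have le_c_n : (c <= n)%N by apply: leq_trans le_mc_n; rewrite leq_addl.
  have le_m_nc : (m <= n - c)%N by rewrite leq_subRL // addnC.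
  rewrite -(subnK le_c_n) e_rec // normrM ger0_norm ?exprn_ge0 ?(ltW x_gt0) //.
  rewrite mulrC exprD mulrA ler_wpM2r ?exprn_ge0 ?(ltW x_gt0) //.
  by apply: IH => //; rewrite ltn_subrL c_gt0 (leq_trans c_gt0 le_c_n).
have Kx_cvg0 : (fun n => K * x ^+ n) @ \oo --> 0.
  rewrite -(mulr0 K); apply: cvgM; first exact: cvg_cst.
  by apply: cvg_expr; rewrite ger0_norm // ltW.
have mKx_cvg0 : (fun n => - (K * x ^+ n)) @ \oo --> 0.
  by rewrite -oppr0; apply: cvgN.
apply: (squeeze_cvgr _ mKx_cvg0 Kx_cvg0).
by exists m => // n /= le_mn; rewrite -ler_norml; apply: e_bound.
Qed.

Lemma cvg_series_eventually_geometric (R : realType) (u : R ^nat) (m c : nat) (x : R) :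
  (0 < c)%N -> 0 < x -> x < 1 ->
  (forall k, (m <= k)%N -> u (k + c)%N = x ^+ c * u k) ->
  series u @ \oo --> series u m + (series u (m + c)%N - series u m) / (1 - x ^+ c).
Proof.
move=> c_gt0 x_gt0 x_lt1 u_rec.
have xc_neq1 : 1 - x ^+ c != 0.
  by rewrite subr_eq0 eq_sym lt_eqF // exprn_ilt1 ?(ltW x_gt0) // -lt0n.
have series_shift t : series u (m + t + c)%N
    = series u (m + c)%N + x ^+ c * (series u (m + t)%N - series u m).
  elim: t => [|t IH]; first by rewrite addn0 subrr mulr0 addr0.
  by rewrite addnS addSn !seriesSr IH u_rec ?leq_addr //; ring.
apply/subr_cvg0.
apply: (@geometric_recurrence_cvg0 _ (fun n => series u n - _) m c x)
  => // n /subnKC <-.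
by rewrite series_shift; field.
Qed.

Lemma normr_subr_int_div (R : archiNumFieldType) (x y : R) (d1 d2 : nat) :
  (0 < d1)%N -> (0 < d2)%N -> x * d1%:R \is a Num.int -> y * d2%:R \is a Num.int ->
  exists a : int, `|x - y| = a%:~R / (d1 * d2)%:R.
Proof.
move=> d1_gt0 d2_gt0 /intrP[a1 xd1] /intrP[a2 yd2].
have d1_neq0 : d1%:R != 0 :> R by rewrite pnatr_eq0 -lt0n.
have d2_neq0 : d2%:R != 0 :> R by rewrite pnatr_eq0 -lt0n.
exists `|a1 * d2%:Z - a2 * d1%:Z|.
rewrite intr_norm -normr_nat -normf_div rmorphB !rmorphM /= -!pmulrn -xd1 -yd2.
by congr `|_|; field; rewrite d1_neq0 d2_neq0.
Qed.

Section Discounting.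

Variables (R : archiNumFieldType) (p q : nat).
Hypotheses (p_gt0 : (0 < p)%N) (q_gt0 : (0 < q)%N).

Definition discounted (g : nat -> int) : R ^nat :=
  fun k => (g k)%:~R / (p%:R / q%:R) ^+ k.

Let p_neq0 : p%:R != 0 :> R. Proof. by rewrite pnatr_eq0 -lt0n. Qed.
Let q_neq0 : q%:R != 0 :> R. Proof. by rewrite pnatr_eq0 -lt0n. Qed.

Lemma discounted_mulr_expn_int g k n : (k <= n)%N ->
  discounted g k * p%:R ^+ n \is a Num.int.
Proof.
move=> /subnK <-; rewrite /discounted exprD expr_div_n invf_div.
have -> : (g k)%:~R * (q%:R ^+ k / p%:R ^+ k) * (p%:R ^+ (n - k) * p%:R ^+ k)
    = (g k)%:~R * q%:R ^+ k * p%:R ^+ (n - k) :> R.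
  by field; rewrite expf_neq0.
by rewrite !rpredM ?rpredX ?intr_int ?rpred_nat.
Qed.

Lemma series_discounted_mulr_expn_int g n :
  series (discounted g) n * p%:R ^+ n \is a Num.int.
Proof.
rewrite seriesEord /= mulr_suml; apply: rpred_sum => k _.
exact/discounted_mulr_expn_int/ltnW.
Qed.

Lemma discounted_shift g k c : g (k + c)%N = g k ->
  discounted g (k + c)%N = (q%:R / p%:R) ^+ c * discounted g k.
Proof.
by move=> g_eq; rewrite /discounted g_eq exprD !expr_div_n; field; rewrite !expf_neq0.
Qed.

End Discounting.

Section Lassos.

Variables (V : finType) (G : game V).

Definition lasso_gamma (st cy : seq V) (k : nat) : int :=
  gamma G (lasso_play G st cy k) (lasso_play G st cy k.+1).

Definition lasso_denom (p q : nat) (st cy : seq V) : nat :=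
  p ^ size st * (p ^ size cy - q ^ size cy).

Lemma lasso_play_periodic st cy k : (size st <= k)%N ->
  lasso_play G st cy (k + size cy) = lasso_play G st cy k.
Proof.
move=> le_st_k; rewrite /lasso_play !ltnNge le_st_k (leq_trans le_st_k (leq_addr _ _)) /=.
by rewrite addnC -addnBA // addnC modnDr.
Qed.

Lemma lasso_gamma_periodic st cy k : (size st <= k)%N ->
  lasso_gamma st cy (k + size cy) = lasso_gamma st cy k.
Proof.
by move=> le_st_k; rewrite /lasso_gamma -addSn !lasso_play_periodic // ltnW.
Qed.

Lemma lasso_denom_gt0 p q st cy : (q < p)%N -> (0 < size cy)%N ->
  (0 < lasso_denom p q st cy)%N.
Proof.
move=> lt_qp cy_gt0.
by rewrite muln_gt0 expn_gt0 (leq_ltn_trans (leq0n q) lt_qp) subn_gt0 ltn_exp2r.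
Qed.

Lemma lasso_denom_le_card p q st cy : (0 < p)%N -> (q <= p)%N -> uniq (st ++ cy) ->
  (lasso_denom p q st cy <= p ^ #|V| - q ^ #|V|)%N.
Proof.
move=> p_gt0 le_qp uniq_lasso; apply: leq_trans (mulnB_expn_le _ _ le_qp) _.
by apply: subn_expn_le => //; rewrite -size_cat -(card_uniqP uniq_lasso) max_card.
Qed.

Lemma lasso_cost_mul_denom_int (R : realType) p q st cy :
  (0 < q)%N -> (q < p)%N -> (0 < size cy)%N ->
  lasso_cost R G p q st cy * (lasso_denom p q st cy)%:R \is a Num.int.
Proof.
move=> q_gt0 lt_qp cy_gt0; have p_gt0 := ltn_trans q_gt0 lt_qp.
set m := size st; set c := size cy; set f := discounted R p q (lasso_gamma st cy).
have p_neq0 : p%:R != 0 :> R by rewrite pnatr_eq0 -lt0n.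
have x_gt0 : 0 < q%:R / p%:R :> R by rewrite divr_gt0 ?ltr0n.
have x_lt1 : q%:R / p%:R < 1 :> R by rewrite ltr_pdivrMr ?ltr0n // mul1r ltr_nat.
have f_rec k : (m <= k)%N -> f (k + c)%N = (q%:R / p%:R) ^+ c * f k.
  by move=> le_mk; apply/discounted_shift/lasso_gamma_periodic.
have -> : lasso_cost R G p q st cy = limn (series f) by [].
rewrite (cvg_lim _ (cvg_series_eventually_geometric cy_gt0 x_gt0 x_lt1 f_rec)) //.
have -> : (series f m + (series f (m + c)%N - series f m) / (1 - (q%:R / p%:R) ^+ c))
    * (lasso_denom p q st cy)%:R
    = series f (m + c)%N * p%:R ^+ (m + c) - series f m * p%:R ^+ m * q%:R ^+ c.
  have lt_qc_pc : (q ^ c < p ^ c)%N by rewrite ltn_exp2r.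
  have pc_neq_qc : p%:R ^+ c - q%:R ^+ c != 0 :> R.
    by rewrite subr_eq0 -!natrX eqr_nat gtn_eqF.
  rewrite natrM natrB ?(ltnW lt_qc_pc) // !natrX exprD expr_div_n.
  by field; rewrite pc_neq_qc !expf_neq0.
have series_int n : series f n * p%:R ^+ n \is a Num.int.
  exact: series_discounted_mulr_expn_int.
by rewrite rpredB ?series_int // rpredM ?series_int // rpredX ?rpred_nat.
Qed.

End Lassos.

Theorem corollary2 (R : realType) (V : finType) (G : game V) (p q : nat)
  (hq : (0 < q)%N) (hpq : (q < p)%N)
  (st1 cy1 st2 cy2 : seq V) :
  simple_lasso G st1 cy1 -> simple_lasso G st2 cy2 ->
  lasso_cost R G p q st1 cy1 != lasso_cost R G p q st2 cy2 ->
  (forall st3 cy3 st4 cy4 : seq V,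
     simple_lasso G st3 cy3 -> simple_lasso G st4 cy4 ->
     lasso_cost R G p q st3 cy3 != lasso_cost R G p q st4 cy4 ->
     `|lasso_cost R G p q st1 cy1 - lasso_cost R G p q st2 cy2|
       <= `|lasso_cost R G p q st3 cy3 - lasso_cost R G p q st4 cy4|) ->
  exists (a : int) (b : nat),
    (0 < b)%N /\
    (b <= (p ^ #|V| - q ^ #|V|) ^ 2 * p ^ (2 * #|V|))%N /\
    `|lasso_cost R G p q st1 cy1 - lasso_cost R G p q st2 cy2|
      = a%:~R / b%:R.
Proof.
move=> [[cy1_gt0 _] uniq1] [[cy2_gt0 _] uniq2] _ _.
have p_gt0 := ltn_trans hq hpq; have le_qp := ltnW hpq.
have denom1_gt0 := lasso_denom_gt0 st1 hpq cy1_gt0.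
have denom2_gt0 := lasso_denom_gt0 st2 hpq cy2_gt0.
have [a cost_diff] := normr_subr_int_div denom1_gt0 denom2_gt0
  (lasso_cost_mul_denom_int G R st1 hq hpq cy1_gt0)
  (lasso_cost_mul_denom_int G R st2 hq hpq cy2_gt0).
exists a, (lasso_denom p q st1 cy1 * lasso_denom p q st2 cy2)%N.
split; first by rewrite muln_gt0 denom1_gt0.
split; last exact: cost_diff.
apply: leq_trans (leq_mul (lasso_denom_le_card p_gt0 le_qp uniq1)
                          (lasso_denom_le_card p_gt0 le_qp uniq2)) _.
by rewrite mulnn leq_pmulr // expn_gt0 p_gt0.
Qed.
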